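(* Let $((T_\infty,\ell),\eta)$ have law $\mu\otimes\mathcal B(1/2)$ and let $Q_\infty=\Phi((T_\infty,\ell),\eta)$. Let $r>0$ be an integer and let $v\in V(Q_\infty)$. Then: 1. $v\in F_{-r}(Q_\infty)$ if and only if $\ell(v')>-r$ for every $v'\in[[\varnothing,v]]$; 2. $v\in\partial F_{-r}(Q_\infty)$ if and only if $\ell(v)=-r$ and $\ell(v')>-r$ for every $v'\in[[\varnothing,v]]\setminus\{v\}$. Here $[[\varnothing,v]]$ denotes the set of vertices on the geodesic path from $\varnothing$ to $v$ in the tree $T_\infty$.
   Context: **The law $\mu$.** $\rho_l$ is the law of a Galton–Watson plane tree with offspring law $P(k)=2^{-k-1}$, root label $l$, and each non-root vertex labeled by its parent's label plus an independent uniform element of $\{-1,0,1\}$. $\mu$ is the law of $(T_\infty,\ell)$, which has a spine $\varnothing=S(0),S(1),\dots$ whose labels $X_n$ form a random walk from 0 with i.i.d. uniform steps in $\{-1,0,1\}$. Conditionally on $(X_n)$, independent trees with law $\rho_{X_n}$ are grafted to the left and to the right of each $S(n)$. **The Schaeffer map $\Phi$.** Corners are indexed by $\mathbb Z$: $c_0,c_1,\dots$ are the left-side corners in clockwise contour order from the root corner $c_0$, and negative indices are the right-side corners in counterclockwise order. The successor of $c_i$ is the first $c_j$, $j>i$, with label $\ell(c_i)-1$. $\Phi$ gives the quadrangulation with vertex set $V(T_\infty)$ made of arcs from corners to successors. It is rooted at the arc from $c_0$ to its successor, with orientation reversed iff $\eta=1$. **The augmented graph $\hat Q_\infty$.** It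 is obtained from $Q_\infty$ as follows: - in each face whose vertices in clockwise order have labels $l,l+1,l,l+1$, add an edge between the two vertices labeled $l+1$; - in each face with labels $l,l+1,l+2,l+1$, double the edge between the last two vertices. **The sets $F_{-r}$ and $\partial F_{-r}$.** $F_{-r}(Q_\infty)$ is the vertex set of the connected component containing $\varnothing$ of the subgraph of $\hat Q_\infty$ induced by $\{v:\ell(v)>-r\}$. $\partial F_{-r}(Q_\infty)$ is the set of vertices $v$ with $\ell(v)\le-r$ joined by an edge of $\hat Q_\infty$ to a vertex of $F_{-r}(Q_\infty)$. *)

From mathcomp Require Import all_boot all_order all_algebra.
Set Implicit Arguments. Unset Strict Implicit. Unset Printing Implicit Defensive.
Import Order.TTheory GRing.Theory Num.Theory.
Local Open Scope ring_scope.

(* Finite plane tree; each child carries the label increment relative to its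
   parent.  Children are listed in the order in which the contour visits them. *)
Inductive ltree := LNode of seq (int * ltree).

Fixpoint wl (t : ltree) : Prop :=
  let: LNode cs := t in
  (fix aux (cs : seq (int * ltree)) : Prop :=
     match cs with
     | [::] => True
     | (d, c) :: cs' => (-1 <= d <= 1) /\ wl c /\ aux cs'
     end) cs.

(* contour of a finite tree: list of visited vertices (paths from the root,
   child indices top-down); each visit is a corner *)
Fixpoint contour (t : ltree) : seq (seq nat) :=
  let: LNode cs := t in
  [::] :: (fix aux (k : nat) (cs : seq (int * ltree)) : seq (seq nat) :=
             match cs with
             | [::] => [::]
             | (_, c) :: cs' =>
                 map (cons k) (contour c) ++ [:: [::]] ++ aux k.+1 cs'
             end) 0%N cs.

Fixpoint pathlabel (t : ltree) (p : seq nat) : int :=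
  match p with
  | [::] => 0
  | i :: p' => let: LNode cs := t in
               let: (d, c) := nth (0, LNode [::]) cs i in d + pathlabel c p'
  end.

(* A realization of (T_infty, ell): spine labels X_n, and the finite labeled
   trees grafted to the left (lt n) and to the right (rt n) of S(n). *)
Record itree := ITree { sp : nat -> int; lt : nat -> ltree; rt : nat -> ltree }.

Definition in_support_mu (T : itree) : Prop :=
  sp T 0%N = 0 /\ (forall n, -1 <= sp T n.+1 - sp T n <= 1) /\
  (forall n, wl (lt T n)) /\ (forall n, wl (rt T n)).

(* Vertices: (n, true, [::]) is the spine vertex S(n); (n, true, p) (resp.
   (n, false, p)) with p nonempty is the vertex at path p of the tree grafted
   to the left (resp. right) of S(n). *)
Definition vertex := (nat * bool * seq nat)%type.
Definition mkv (n : nat) (b : bool) (p : seq nat) : vertex :=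
  if p is [::] then (n, true, [::]) else (n, b, p).
Definition root_v : vertex := (0%N, true, [::]).

Definition lab (T : itree) (v : vertex) : int :=
  let: (n, b, p) := v in
  sp T n + pathlabel (if b then lt T n else rt T n) p.

(* parent in T_infty (the root is its own parent) *)
Definition parent (v : vertex) : vertex :=
  let: (n, b, p) := v in
  if p is [::] then (n.-1, true, [::]) else mkv n b (take (size p).-1 p).

(* v' lies on the geodesic [[root, v]] of T_infty, i.e. v' is an ancestor of v
   (v included) *)
Definition on_geod (v' v : vertex) : Prop := exists k, iter k parent v = v'.

Fixpoint nthcat_aux (A : Type) (x0 : A) (f : nat -> seq A) (fuel n k : nat) : A :=
  match fuel with
  | 0 => x0
  | fuel'.+1 => if (k < size (f n))%N then nth x0 (f n) k
                else nthcat_aux x0 f fuel' n.+1 (k - size (f n))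
  end.
Definition nthcat (A : Type) (x0 : A) (f : nat -> seq A) (k : nat) : A :=
  nthcat_aux x0 f k.+1 0 k.

(* left side: clockwise contour starting at the root corner;
   right side: counterclockwise contour starting at the root corner *)
Definition leftseq (T : itree) (k : nat) : vertex :=
  nthcat root_v (fun n => map (mkv n true) (contour (lt T n))) k.
Definition rightseq (T : itree) (k : nat) : vertex :=
  nthcat root_v (fun n => map (mkv n false) (contour (rt T n))) k.

(* corners c_i, i in Z: c_0 root corner, c_i (i>0) left side,
   c_{-m} (m>0) the m-th right side corner after c_0 (counterclockwise) *)
Definition cv (T : itree) (i : int) : vertex :=
  match i with
  | Posz k => leftseq T k
  | Negz m => rightseq T m.+1
  end.
Definition clab (T : itree) (i : int) : int := lab T (cv T i).

Definition is_succ (T : itree) (i j : int) : Prop :=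
  i < j /\ clab T j = clab T i - 1 /\
  (forall k, i < k -> k < j -> clab T k <> clab T i - 1).

(* rooted map as vertex set, adjacency relation (multiplicities are irrelevant
   for everything below) and oriented root edge *)
Record rmap := RMap { mV : vertex -> Prop; madj : vertex -> vertex -> Prop;
                      mroot : vertex -> vertex -> Prop }.

Definition VT (T : itree) (v : vertex) : Prop := exists i, cv T i = v.

Definition Phi (T : itree) (eta : bool) : rmap :=
  RMap (VT T)
       (fun x y => exists i j, is_succ T i j /\
          ((x = cv T i /\ y = cv T j) \/ (x = cv T j /\ y = cv T i)))
       (fun x y => exists j, is_succ T 0 j /\
          (if eta then x = cv T j /\ y = cv T 0 else x = cv T 0 /\ y = cv T j)).

Definition svert (T : itree) (i : int) (x : vertex) : Prop :=
  exists j, is_succ T i j /\ cv T j = x.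

(* Faces of Q_infty (one per edge of T_infty, cf. Schaeffer's bijection):
   (i,i+1) and (j,j+1) are the two traversals of a tree edge {a,b} with
   a = c_i = c_{j+1}, b = c_{i+1} = c_j.  The face is the cyclic sequence of
   its four vertices (x0,x1,x2,x3). *)
Definition face (T : itree) (x0 x1 x2 x3 : vertex) : Prop :=
  exists i j, cv T i = cv T (j + 1) /\ cv T (i + 1) = cv T j /\
  let a := cv T i in let b := cv T (i + 1) in
  (  (lab T b = lab T a /\
        x0 = a /\ svert T i x1 /\ x2 = b /\ svert T j x3)
  \/ (lab T b = lab T a + 1 /\
        x0 = a /\ svert T i x1 /\ svert T (i + 1) x2 /\ x3 = b)
  \/ (lab T b = lab T a - 1 /\
        x0 = b /\ svert T j x1 /\ svert T (j + 1) x2 /\ x3 = a)).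

(* augmented graph: in each face with labels l,l+1,l,l+1 (cyclically) add an
   edge between the two vertices labelled l+1.  (Doubling edges does not
   change adjacency.) *)
Definition aug_adj (T : itree) (Q : rmap) (x y : vertex) : Prop :=
  madj Q x y \/
  exists x0 x1 x2 x3 l, face T x0 x1 x2 x3 /\
    ((lab T x0 = l /\ lab T x1 = l + 1 /\ lab T x2 = l /\ lab T x3 = l + 1 /\
      ((x = x1 /\ y = x3) \/ (x = x3 /\ y = x1)))
  \/ (lab T x0 = l + 1 /\ lab T x1 = l /\ lab T x2 = l + 1 /\ lab T x3 = l /\
      ((x = x0 /\ y = x2) \/ (x = x2 /\ y = x0)))).

Inductive conn (P : vertex -> Prop) (adj : vertex -> vertex -> Prop)
  : vertex -> vertex -> Prop :=
| conn_refl x : P x -> conn P adj x x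
| conn_step x y z : P x -> adj x y -> conn P adj y z -> conn P adj x z.

Definition Fr (T : itree) (Q : rmap) (r : nat) (v : vertex) : Prop :=
  conn (fun w => mV Q w /\ lab T w > - (r%:Z)) (aug_adj T Q) root_v v.

Definition dFr (T : itree) (Q : rmap) (r : nat) (v : vertex) : Prop :=
  mV Q v /\ lab T v <= - (r%:Z) /\ exists w, Fr T Q r w /\ aug_adj T Q v w.

From mathcomp Require Import all_boot all_order all_algebra.
From mathcomp Require Import zify.
Set Implicit Arguments. Unset Strict Implicit. Unset Printing Implicit Defensive.
Import Order.TTheory GRing.Theory Num.Theory.
Local Open Scope ring_scope.

(* Consecutive corners [c_i], [c_{i+1}] are the two ends of a tree edge, and
   labels differ by at most one along tree edges.  Between a corner and its
   successor all labels are at least that of the corner, so an edge of the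
   augmented map between two vertices of label [> -r] can be traded for a
   walk along the contour, i.e. along tree edges, through vertices of label
   [> -r]; the added diagonals are tree edges themselves.  Hence every vertex
   of [F_{-r}] has its whole ancestral line above [-r].  Conversely every tree
   edge is an edge of the augmented map, so such a vertex is reached from the
   root along its geodesic.  An edge leaving [F_{-r}] is an arc from a corner
   [c_i] to its successor [c_j]; the corner [c_{j-1}] then lies in [F_{-r}]
   and is the parent of [c_j], which describes [dF_{-r}]. *)

(** * Contours of finite plane trees *)

Fixpoint all_children (P : ltree -> Prop) (cs : seq (int * ltree)) : Prop :=
  match cs with [::] => True | (_, c) :: cs' => P c /\ all_children P cs' end.

Lemma ltree_deep_ind (P : ltree -> Prop) :
  (forall cs, all_children P cs -> P (LNode cs)) -> forall t, P t.
Proof.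
move=> H; refine (fix IH t := match t with LNode cs => H cs
  ((fix aux cs := match cs return all_children P cs with
     [::] => I | (d, c) :: cs' => conj (IH c) (aux cs') end) cs) end).
Qed.

(* The inner loop of [contour]: [contour (LNode cs)] is convertible to
   [[::] :: contour_from 0 cs]. *)
Fixpoint contour_from (k : nat) (cs : seq (int * ltree)) : seq (seq nat) :=
  match cs with
  | [::] => [::]
  | (_, c) :: cs' => map (cons k) (contour c) ++ [:: [::]] ++ contour_from k.+1 cs'
  end.

Definition parent_path (p : seq nat) := take (size p).-1 p.

Definition path_edge (x y : seq nat) : bool :=
  ((y != [::]) && (x == parent_path y)) || ((x != [::]) && (y == parent_path x)).

Lemma parent_path_cons k q : q != [::] -> parent_path (k :: q) = k :: parent_path q.
Proof. by case: q. Qed.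

Lemma size_parent_path p : size (parent_path p) = (size p).-1.
Proof. by rewrite /parent_path size_take; case: p => //= a p; rewrite ltnSn. Qed.

Lemma path_edge_cons k x y : path_edge x y -> path_edge (k :: x) (k :: y).
Proof.
rewrite /path_edge => /orP [/andP [hy /eqP ->]|/andP [hx /eqP ->]].
  by apply/orP; left; rewrite parent_path_cons // eqxx.
by apply/orP; right; rewrite parent_path_cons // eqxx.
Qed.

Definition traverses_edges (s : seq (seq nat)) : Prop :=
  forall p, p \in s -> p != [::] ->
  (exists s1 s2, s = s1 ++ parent_path p :: p :: s2) /\
  (exists s1 s2, s = s1 ++ p :: parent_path p :: s2).

Definition contour_spec (s : seq (seq nat)) : Prop := exists rest,
  [/\ s = [::] :: rest, last [::] rest = [::], path path_edge [::] rest
    & traverses_edges s].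

Lemma contour_from_spec cs : all_children (fun c => contour_spec (contour c)) cs ->
  forall k, [/\ last [::] (contour_from k cs) = [::],
                path path_edge [::] (contour_from k cs)
              & traverses_edges ([::] :: contour_from k cs)].
Proof.
elim: cs => [|[d c] cs IH] /=.
  by move=> _ k; split => // p; rewrite inE => /eqP ->.
move=> [[rest [hc hl hp htr]] /IH {}IH] k.
have [L' P' T'] := IH k.+1.
set C := contour_from k.+1 cs.
have hM : map (cons k) (contour c) = [:: k] :: map (cons k) rest by rewrite hc.
have hlM : last [::] (map (cons k) (contour c)) = [:: k].
  by rewrite hM /= (last_map (cons k) rest [::]) hl.
split; first by rewrite last_cat hlM.
  rewrite cat_path hlM /= P' andbT hM /= path_map.
  by apply: sub_path hp => x y; exact: path_edge_cons.
move=> p; rewrite inE mem_cat => /orP [/eqP -> //|/orP [pM|pC]] pn; last first.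
  have [[s1 [s2 e1]] [s3 [s4 e2]]] := T' p pC pn.
  split; [exists (([::] :: map (cons k) (contour c)) ++ s1), s2
         |exists (([::] :: map (cons k) (contour c)) ++ s3), s4].
    by rewrite -catA -e1.
  by rewrite -catA -e2.
move/mapP: pM => [q qc ->].
have [->|qn] := eqVneq q [::].
  split; first by exists [::], (map (cons k) rest ++ [:: [::]] ++ C); rewrite hM.
  move: hl; case/lastP: rest hc hM hp => [|r x] hc hM hp.
    by move=> _; exists [:: [::]], C; rewrite hM.
  rewrite last_rcons => hx; subst x.
  exists ([::] :: [:: k] :: map (cons k) r), C.
  by rewrite hM map_rcons /= cat_rcons.
have [[s1 [s2 e1]] [s3 [s4 e2]]] := htr q qc qn.
split; [exists ([::] :: map (cons k) s1), (map (cons k) s2 ++ [:: [::]] ++ C)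
       |exists ([::] :: map (cons k) s3), (map (cons k) s4 ++ [:: [::]] ++ C)].
  by rewrite e1 map_cat /= parent_path_cons // -catA.
by rewrite e2 map_cat /= parent_path_cons // -catA.
Qed.

Lemma contourP t : contour_spec (contour t).
Proof.
elim/ltree_deep_ind: t => cs H.
by have [hl hp htr] := contour_from_spec H 0; exists (contour_from 0 cs).
Qed.

(** * Infinite concatenation of nonempty blocks *)

Section Concatenation.
Variables (A : Type) (x0 : A) (f : nat -> seq A).
Hypothesis f_nonempty : forall n, (0 < size (f n))%N.

Fixpoint block_start (n : nat) : nat :=
  if n is n'.+1 then (block_start n' + size (f n'))%N else 0%N.

Lemma block_start_mono j n : (j <= n)%N -> (block_start j <= block_start n)%N.
Proof.
elim: n => [|n IH]; first by rewrite leqn0 => /eqP ->.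
rewrite leq_eqVlt => /orP [/eqP -> //|]; rewrite ltnS => /IH /= h; lia.
Qed.

Lemma block_start_ge n : (n <= block_start n)%N.
Proof. by elim: n => [//|n IH] /=; have := f_nonempty n; lia. Qed.

Lemma nthcat_aux_block fuel j n m :
  (j <= n)%N -> (n - j < fuel)%N -> (m < size (f n))%N ->
  nthcat_aux x0 f fuel j (block_start n - block_start j + m) = nth x0 (f n) m.
Proof.
elim: fuel j => [|fuel IH] j hjn hf hm //=.
have [->|ljn] := eqVneq j n; first by rewrite subnn add0n hm.
have ljn' : (j < n)%N by rewrite ltn_neqAle ljn hjn.
have /= h1 := block_start_mono ljn'.
rewrite ifF; last by apply/negbTE; rewrite -leqNgt; lia.
have -> : (block_start n - block_start j + m - size (f j)
           = block_start n - block_start j.+1 + m)%N by rewrite /=; lia.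
apply: IH => //; lia.
Qed.

Lemma nthcat_block n m :
  (m < size (f n))%N -> nthcat x0 f (block_start n + m) = nth x0 (f n) m.
Proof.
move=> hm; rewrite /nthcat.
have {2}-> : (block_start n + m = block_start n - block_start 0 + m)%N by rewrite subn0.
apply: nthcat_aux_block => //; have := block_start_ge n; lia.
Qed.

Lemma nthcat_index k :
  exists n m, (m < size (f n))%N /\ k = (block_start n + m)%N.
Proof.
elim: k => [|k [n [m [hm ->]]]]; first by exists 0%N, 0%N.
have [h|h] := ltnP m.+1 (size (f n)); first by exists n, m.+1; split => //; lia.
by exists n.+1, 0%N; split => //=; lia.
Qed.

Lemma nthcat_in_block k :
  exists n m, (m < size (f n))%N /\ nthcat x0 f k = nth x0 (f n) m.
Proof.
have [n [m [hm ->]]] := nthcat_index k.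
by exists n, m; split => //; exact: nthcat_block.
Qed.

Lemma nthcat_consecutive n s1 x y s2 : f n = s1 ++ x :: y :: s2 ->
  exists k, nthcat x0 f k = x /\ nthcat x0 f k.+1 = y.
Proof.
move=> e; have hs : (size s1 < size (f n))%N by rewrite e size_cat /=; lia.
have hs' : ((size s1).+1 < size (f n))%N by rewrite e size_cat /=; lia.
exists (block_start n + size s1)%N; rewrite -addnS !nthcat_block // e !nth_cat.
by rewrite ltnn subnn ltnNge leqnSn subSnn.
Qed.

Lemma nthcat_block_junction n :
  exists k, nthcat x0 f k = nth x0 (f n) (size (f n)).-1 /\
            nthcat x0 f k.+1 = nth x0 (f n.+1) 0.
Proof.
have hn := f_nonempty n.
exists (block_start n + (size (f n)).-1)%N; rewrite nthcat_block; last lia.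
split => //; have -> : ((block_start n + (size (f n)).-1).+1 = block_start n.+1 + 0)%N.
  by rewrite /=; lia.
exact: nthcat_block.
Qed.

Lemma nthcat_rel (e : A -> A -> Prop) :
  (forall n m, (m.+1 < size (f n))%N -> e (nth x0 (f n) m) (nth x0 (f n) m.+1)) ->
  (forall n, e (nth x0 (f n) (size (f n)).-1) (nth x0 (f n.+1) 0)) ->
  forall k, e (nthcat x0 f k) (nthcat x0 f k.+1).
Proof.
move=> e_in e_junction k; have [n [m [hm ->]]] := nthcat_index k.
have [h|h] := ltnP m.+1 (size (f n)).
  by rewrite -addnS !nthcat_block //; apply: e_in.
have -> : ((block_start n + m).+1 = block_start n.+1 + 0)%N by rewrite /=; lia.
rewrite !nthcat_block //; have -> : m = (size (f n)).-1 by lia.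
exact: e_junction.
Qed.

End Concatenation.

(** * The corner sequence of the infinite tree *)

Definition tree_adj (x y : vertex) : Prop := x = parent y \/ y = parent x.

Lemma tree_adj_sym x y : tree_adj x y -> tree_adj y x.
Proof. by case; [right|left]. Qed.

Lemma mkv_nonroot n b p : p != [::] -> mkv n b p = (n, b, p).
Proof. by case: p. Qed.

Lemma parent_nonroot n b p : p != [::] -> parent (n, b, p) = mkv n b (parent_path p).
Proof. by case: p. Qed.

Lemma path_edge_tree_adj n b x y : path_edge x y -> tree_adj (mkv n b x) (mkv n b y).
Proof.
case/orP => /andP [hy /eqP ->].
  by left; rewrite (mkv_nonroot _ _ hy) parent_nonroot.
by right; rewrite (mkv_nonroot _ _ hy) parent_nonroot.
Qed.

Definition corner_block (n : nat) (b : bool) (t : ltree) : seq vertex :=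
  map (mkv n b) (contour t).

Section CornerBlock.
Variables (n : nat) (b : bool) (t : ltree).

Lemma corner_block_nonempty : (0 < size (corner_block n b t))%N.
Proof. by have [rest [e _ _ _]] := contourP t; rewrite /corner_block e. Qed.

Lemma corner_block_head : nth root_v (corner_block n b t) 0 = (n, true, [::]).
Proof. by have [rest [e _ _ _]] := contourP t; rewrite /corner_block e. Qed.

Lemma corner_block_last :
  nth root_v (corner_block n b t) (size (corner_block n b t)).-1 = (n, true, [::]).
Proof.
have [rest [e hl _ _]] := contourP t; rewrite nth_last /corner_block e /=.
by rewrite (last_map (mkv n b) rest [::]) hl.
Qed.

Lemma corner_block_adj m : (m.+1 < size (corner_block n b t))%N ->
  tree_adj (nth root_v (corner_block n b t) m) (nth root_v (corner_block n b t) m.+1).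
Proof.
have [rest [e _ hp _]] := contourP t; rewrite /corner_block size_map => hm.
rewrite !(nth_map [::]); try lia.
apply: path_edge_tree_adj; rewrite e.
by move/(pathP [::]): hp => /(_ m); rewrite e /= in hm; apply; lia.
Qed.

Lemma corner_block_traverses p : p \in contour t -> p != [::] ->
  (exists s1 s2, corner_block n b t = s1 ++ parent (n, b, p) :: (n, b, p) :: s2) /\
  (exists s1 s2, corner_block n b t = s1 ++ (n, b, p) :: parent (n, b, p) :: s2).
Proof.
move=> hp pn; have [rest [e _ _ htr]] := contourP t.
have [[s1 [s2 e1]] [s3 [s4 e2]]] := htr p hp pn.
rewrite /corner_block parent_nonroot // -(mkv_nonroot n b pn); split.
  by exists (map (mkv n b) s1), (map (mkv n b) s2); rewrite e1 map_cat.
by exists (map (mkv n b) s3), (map (mkv n b) s4); rewrite e2 map_cat.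
Qed.

End CornerBlock.

Section Corners.
Variable T : itree.

Let left_block n := corner_block n true (lt T n).
Let right_block n := corner_block n false (rt T n).

Let left_nonempty n : (0 < size (left_block n))%N.
Proof. exact: corner_block_nonempty. Qed.
Let right_nonempty n : (0 < size (right_block n))%N.
Proof. exact: corner_block_nonempty. Qed.

Let leftseqE k : leftseq T k = nthcat root_v left_block k.
Proof. by []. Qed.
Let rightseqE k : rightseq T k = nthcat root_v right_block k.
Proof. by []. Qed.

Lemma leftseq0 : leftseq T 0 = root_v.
Proof.
rewrite leftseqE -[0%N]/(block_start left_block 0 + 0)%N.
by rewrite (nthcat_block _ left_nonempty) ?corner_block_head.
Qed.

Lemma rightseq0 : rightseq T 0 = root_v.
Proof.
rewrite rightseqE -[0%N]/(block_start right_block 0 + 0)%N.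
by rewrite (nthcat_block _ right_nonempty) ?corner_block_head.
Qed.

Lemma leftseq_adj k : tree_adj (leftseq T k) (leftseq T k.+1).
Proof.
apply: (nthcat_rel left_nonempty) => [n m|n]; first exact: corner_block_adj.
by rewrite corner_block_last corner_block_head; left.
Qed.

Lemma rightseq_adj k : tree_adj (rightseq T k) (rightseq T k.+1).
Proof.
apply: (nthcat_rel right_nonempty) => [n m|n]; first exact: corner_block_adj.
by rewrite corner_block_last corner_block_head; left.
Qed.

Lemma cv_opp (k : nat) : cv T (- (k%:Z)) = rightseq T k.
Proof.
case: k => [|k]; first by rewrite /= rightseq0 leftseq0.
by rewrite -NegzE.
Qed.

Lemma cv_succ_left (k : nat) : cv T (k%:Z + 1) = leftseq T k.+1.
Proof. by have -> : k%:Z + 1 = k.+1%:Z by lia. Qed.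

Lemma cv_succ_right (k : nat) : cv T (- (k.+1%:Z) + 1) = rightseq T k.
Proof. by rewrite -cv_opp; congr cv; lia. Qed.

Lemma cv_adj (i : int) : tree_adj (cv T i) (cv T (i + 1)).
Proof.
case: i => [k|m].
  by rewrite cv_succ_left; exact: leftseq_adj.
have -> : Negz m + 1 = - (m%:Z) by rewrite NegzE; lia.
by rewrite cv_opp; apply: tree_adj_sym; exact: rightseq_adj.
Qed.

Lemma cv_mkv (i : int) : exists n b p, cv T i = mkv n b p /\
  p \in contour (if b then lt T n else rt T n).
Proof.
case: i => [k|m] /=; rewrite ?leftseqE ?rightseqE.
  have [n [m [hm ->]]] := nthcat_in_block root_v left_nonempty k.
  rewrite /left_block /corner_block size_map in hm *.
  by exists n, true, (nth [::] (contour (lt T n)) m); rewrite (nth_map [::]) ?mem_nth.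
have [n [k [hm ->]]] := nthcat_in_block root_v right_nonempty m.+1.
rewrite /right_block /corner_block size_map in hm *.
by exists n, false, (nth [::] (contour (rt T n)) k); rewrite (nth_map [::]) ?mem_nth.
Qed.

Lemma cv_tree_edge v : VT T v -> v <> root_v ->
  (exists i, cv T i = parent v /\ cv T (i + 1) = v) /\
  (exists j, cv T j = v /\ cv T (j + 1) = parent v).
Proof.
move=> [i0 <-]; have [n [b [p [-> hp]]]] := cv_mkv i0 => vr.
have [pe|pn] := eqVneq p [::].
  subst p; case: n vr hp => [|n] vr hp; first by case: vr.
  have [k [h1 h2]] := nthcat_block_junction root_v left_nonempty n.
  have [k' [h1' h2']] := nthcat_block_junction root_v right_nonempty n.
  rewrite corner_block_last corner_block_head in h1 h2.
  rewrite corner_block_last corner_block_head in h1' h2'.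
  split; first by exists (Posz k); rewrite cv_succ_left /= !leftseqE h1 h2.
  by exists (- (k'.+1%:Z)); rewrite cv_succ_right cv_opp !rightseqE h1' h2'.
rewrite mkv_nonroot // {vr}; case: b hp => hp.
  have [[s1 [s2 e1]] [s3 [s4 e2]]] := corner_block_traverses n true hp pn.
  have [k [h1 h2]] := nthcat_consecutive root_v left_nonempty e1.
  have [k' [h1' h2']] := nthcat_consecutive root_v left_nonempty e2.
  by split; [exists (Posz k) | exists (Posz k')]; rewrite cv_succ_left /= !leftseqE.
have [[s1 [s2 e1]] [s3 [s4 e2]]] := corner_block_traverses n false hp pn.
have [k [h1 h2]] := nthcat_consecutive root_v right_nonempty e1.
have [k' [h1' h2']] := nthcat_consecutive root_v right_nonempty e2.
by split; [exists (- (k'.+1%:Z)) | exists (- (k.+1%:Z))];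
  rewrite cv_succ_right cv_opp !rightseqE.
Qed.

Lemma VT_parent v : VT T v -> v <> root_v -> VT T (parent v).
Proof. by move=> hv vr; have [[i [hi _]] _] := cv_tree_edge hv vr; exists i. Qed.

End Corners.

(** * Labels *)

Lemma le_int_add_nat (i j : int) : i <= j -> exists d : nat, j = i + d%:Z.
Proof. by move=> h; exists `|j - i|%N; lia. Qed.

(* [is_succ T i j] unfolds to [first_descent (clab T) i j]. *)
Definition first_descent (g : int -> int) (i j : int) : Prop :=
  i < j /\ g j = g i - 1 /\ (forall k, i < k -> k < j -> g k <> g i - 1).

Section FirstDescent.
Variable g : int -> int.
Hypothesis g_step : forall x, g x - 1 <= g (x + 1).

Lemma first_descent_ge i j : first_descent g i j ->
  forall k, i <= k -> k < j -> g i <= g k.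
Proof.
move=> [_ [_ hnot]] k /le_int_add_nat [e ->] {k}.
elim: e => [|e IH] hj; first by rewrite addr0.
have := IH ltac:(lia); have := g_step (i + e%:Z).
have -> : i + e%:Z + 1 = i + e.+1%:Z by lia.
have := hnot (i + e.+1%:Z) ltac:(lia) hj; lia.
Qed.

Lemma first_descent_exists i k : i < k -> g k < g i -> exists j, first_descent g i j.
Proof.
move=> hik hk; have [[|d0] ed0] := le_int_add_nat (ltW hik); first lia.
have hex : exists d : nat, g (i + d.+1%:Z) <= g i - 1 by exists d0; rewrite -ed0; lia.
case: (ex_minnP hex) => d hd hmin.
have above e : (e < d)%N -> g i - 1 < g (i + e.+1%:Z).
  by move=> he; rewrite ltNge; apply/negP => /hmin; lia.
exists (i + d.+1%:Z); split; first lia.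
split; last first.
  move=> k' hik' hk'j; have [[|e] ek] := le_int_add_nat (ltW hik'); subst k'.
    lia.
  by have := above e ltac:(lia); lia.
apply/eqP; rewrite eq_le hd /=; case: d hd hmin above => [|d] _ _ above.
  exact: g_step.
have := above d (ltnSn d); have := g_step (i + d.+1%:Z).
have -> : i + d.+1%:Z + 1 = i + d.+2%:Z by lia.
lia.
Qed.

End FirstDescent.

Lemma wl_nth cs i : wl (LNode cs) ->
  let: (d, c) := nth (0, LNode [::]) cs i in (-1 <= d <= 1) /\ wl c.
Proof.
elim: cs i => [|[d c] cs IH] i /=; first by case: i.
by move=> [hd [hc hcs]]; case: i => [|i] //=; exact: IH.
Qed.

Lemma pathlabel_step t p : wl t -> p != [::] ->
  -1 <= pathlabel t p - pathlabel t (parent_path p) <= 1.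
Proof.
elim: p t => [//|i p IH] [cs] hw _; move: (wl_nth i hw).
have [->|pn] := eqVneq p [::].
  by rewrite /parent_path /=; case: (nth _ cs i) => d c /= [hd _]; rewrite addr0 subr0.
rewrite parent_path_cons //=; case: (nth _ cs i) => d c /= [hd hc].
by have := IH c hc pn; lia.
Qed.

Lemma lab_mkv T n b p : lab T (mkv n b p) = lab T (n, b, p).
Proof. by case: p => //; case: b. Qed.

Section Labels.
Variable T : itree.
Hypothesis HT : in_support_mu T.

Lemma lab_root : lab T root_v = 0.
Proof. by case: HT => h _; rewrite /lab /= h addr0. Qed.

Lemma lab_parent_step v : -1 <= lab T v - lab T (parent v) <= 1.
Proof.
case: HT => [_ [hs [hl hr]]]; case: v => [[n b] p].
have [->|pn] := eqVneq p [::].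
  rewrite /parent /lab /=; case: b; case: n => [|n] /=; rewrite ?subrr ?addr0 //;
  by have := hs n; lia.
rewrite parent_nonroot // lab_mkv /lab.
by case: b; [have := pathlabel_step (hl n) pn | have := pathlabel_step (hr n) pn]; lia.
Qed.

Lemma clab_step (i : int) : -1 <= clab T (i + 1) - clab T i <= 1.
Proof.
rewrite /clab; case: (cv_adj T i) => ->; first exact: lab_parent_step.
by have := lab_parent_step (cv T i); lia.
Qed.

Lemma clab0 : clab T 0 = 0.
Proof. by rewrite /clab /= leftseq0 lab_root. Qed.

Lemma clab_nat_ge (k : nat) : - (k%:Z) <= clab T k.
Proof.
elim: k => [|k IH]; first by rewrite clab0.
have := clab_step k; have -> : k%:Z + 1 = k.+1%:Z by lia.
lia.
Qed.

Lemma clab_ge (i : int) : exists N : nat, i <= N%:Z /\ - (N%:Z) <= clab T i.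
Proof.
case: i => [k|m]; first by exists k; split => //; exact: clab_nat_ge.
exists m.+1; rewrite NegzE; split; first lia.
elim: m.+1 => [|k IH]; first by rewrite oppr0 clab0.
have := clab_step (- (k.+1%:Z)); have -> : - (k.+1%:Z) + 1 = - (k%:Z) by lia.
lia.
Qed.

Lemma succ_exists (Hinf : forall m : int, exists k : nat, lab T (leftseq T k) <= m) i :
  exists j, is_succ T i j.
Proof.
have [N [hiN hN]] := clab_ge i.
have [K hK] := Hinf (- (N%:Z) - 1).
have hKge : - (K%:Z) <= lab T (leftseq T K) := clab_nat_ge K.
apply: (@first_descent_exists (clab T) _ i K).
- by move=> x; have := clab_step x; lia.
- lia.
- by change (clab T K) with (lab T (leftseq T K)); lia.
Qed.

Lemma succ_clab_ge i j : is_succ T i j -> forall k, i <= k -> k < j -> clab T i <= clab T k.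
Proof. by apply: first_descent_ge => x; have := clab_step x; lia. Qed.

End Labels.

(** * Vertices all of whose ancestors lie above a level *)

Lemma on_geodP v' v : on_geod v' v <-> v' = v \/ on_geod v' (parent v).
Proof.
split; first by move=> [[|k] hk]; [left | right; exists k; rewrite -iterSr].
by case=> [->|[k hk]]; [exists 0%N | exists k.+1; rewrite iterSr].
Qed.

Definition ancestors_above (T : itree) (h : int) (v : vertex) : Prop :=
  forall v', on_geod v' v -> h < lab T v'.

Section AncestorsAbove.
Variables (T : itree) (h : int).

Lemma ancestors_aboveE v :
  ancestors_above T h v <-> h < lab T v /\ ancestors_above T h (parent v).
Proof.
split; last by move=> [h1 h2] v' /on_geodP [->|/h2].
move=> hv; split; first by apply: hv; exists 0%N.
by move=> v' hv'; apply: hv; apply/on_geodP; right.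
Qed.

Lemma ancestors_above_tree_adj x y : tree_adj x y -> h < lab T x -> h < lab T y ->
  ancestors_above T h x <-> ancestors_above T h y.
Proof.
case=> -> hx hy.
  by rewrite [X in _ <-> X]ancestors_aboveE; tauto.
by rewrite [X in X <-> _]ancestors_aboveE; tauto.
Qed.

Lemma ancestors_above_root : in_support_mu T -> h < 0 -> ancestors_above T h root_v.
Proof.
move=> HT hh v' [k <-]; suff -> : iter k parent root_v = root_v by rewrite lab_root.
by elim: k => [//|k IH]; rewrite iterS IH.
Qed.

Lemma ancestors_above_corners i (d : nat) :
  (forall e : nat, (e <= d)%N -> h < clab T (i + e%:Z)) ->
  ancestors_above T h (cv T i) <-> ancestors_above T h (cv T (i + d%:Z)).
Proof.
elim: d => [|d IH] hd; first by rewrite addr0.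
rewrite IH => [|e he]; last exact/hd/leqW.
have -> : i + d.+1%:Z = i + d%:Z + 1 by lia.
apply: ancestors_above_tree_adj; [exact: cv_adj | exact: hd | ].
by rewrite (_ : i + d%:Z + 1 = i + d.+1%:Z); [exact: hd | lia].
Qed.

End AncestorsAbove.

Section Depth.
Variable T : itree.

Definition depth (v : vertex) : nat := (v.1.1 + size v.2)%N.

Lemma depth_mkv n b p : depth (mkv n b p) = (n + size p)%N.
Proof. by case: p. Qed.

Lemma depth_parent_le v : (depth (parent v) <= depth v)%N.
Proof.
case: v => [[n b] p]; have [->|pn] := eqVneq p [::]; first by rewrite /depth /=; lia.
by rewrite parent_nonroot // depth_mkv size_parent_path /depth /=; lia.
Qed.

(* [VT T v] rules out the junk vertex [(0, false, [::])], whose parent is the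
   root. *)
Lemma depth_parent_lt v : VT T v -> v <> root_v -> (depth (parent v) < depth v)%N.
Proof.
move=> [i <-]; have [n [b [p [-> _]]]] := cv_mkv T i.
case: p => [|a p]; first by case: n => [|n] //= _; rewrite /depth /=.
by rewrite mkv_nonroot // parent_nonroot // depth_mkv size_parent_path /depth /= => _; lia.
Qed.

Lemma strict_ancestorsE h v : VT T v -> v <> root_v ->
  (forall v', on_geod v' v -> v' <> v -> h < lab T v') <-> ancestors_above T h (parent v).
Proof.
move=> hv vr; split => [hstrict v' hv'|hp v' /on_geodP [//|/hp //]].
apply: hstrict; first by apply/on_geodP; right.
move: hv' => [k <-] e.
have : (depth (iter k parent (parent v)) <= depth (parent v))%N.
  elim: k {e} => [//|k IH]; rewrite iterS; exact: leq_trans (depth_parent_le _) IH.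
by rewrite e; have := depth_parent_lt hv vr; lia.
Qed.

End Depth.

(** * The augmented map *)

Lemma svert_lab T i x : svert T i x -> lab T x = clab T i - 1.
Proof. by move=> [j [[_ [hl _]] <-]]. Qed.

(* In a face the successor vertices have labels one below the corners they
   come from, so the labels [l+1, l, l+1, l] only occur in faces of a tree
   edge with equal end labels, and the added diagonal is that tree edge. *)
Lemma aug_adj_cases T eta x y : aug_adj T (Phi T eta) x y ->
  (exists i j, is_succ T i j /\
     ((x = cv T i /\ y = cv T j) \/ (x = cv T j /\ y = cv T i)))
  \/ (lab T x = lab T y /\ tree_adj x y).
Proof.
case=> [//|[x0 [x1 [x2 [x3 [l [[i [j [e1 [e2 hf]]]] hpat]]]]]]]; first by left.
rewrite /= in hf; right.
case: hf => [[hb [h0 [/svert_lab s1 [h3 /svert_lab s2]]]]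
           |[[hb [h0 [/svert_lab s1 [/svert_lab s2 h3]]]]
           |[hb [h0 [/svert_lab s1 [/svert_lab s2 h3]]]]]];
  rewrite /clab -?e1 -?e2 in s1 s2; subst;
  case: hpat => [[a0 [a1 [a2 [a3 _]]]] | [a0 [a1 [a2 [a3 hxy]]]]]; try lia.
have := cv_adj T i.
by case: hxy => [[-> ->]|[-> ->]] ta; split; try lia; last exact: tree_adj_sym.
Qed.

Lemma is_succ_next T i : clab T (i + 1) = clab T i - 1 -> is_succ T i (i + 1).
Proof. by move=> hl; do !split => //; [lia | move=> k; lia]. Qed.

Lemma conn_head (P : vertex -> Prop) adj x z : conn P adj x z -> P x.
Proof. by case. Qed.

Lemma conn_rstep (P : vertex -> Prop) adj x y z :
  conn P adj x y -> adj y z -> P z -> conn P adj x z.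
Proof.
elim=> [a pa|a b c pa ab _ IH] hz pz; last exact: conn_step pa ab (IH hz pz).
by apply: conn_step pa hz _; apply: conn_refl.
Qed.

Section Levels.
Variables (T : itree) (eta : bool).
Hypothesis HT : in_support_mu T.

Let Q := Phi T eta.

(* Arcs of [Q] between vertices above [h] can be replaced by walks along the
   contour through corners above [h]: those lie between a corner and its
   successor, where labels are at least that of the corner. *)
Lemma aug_adj_ancestors_above h x y : aug_adj T Q x y -> h < lab T x -> h < lab T y ->
  ancestors_above T h x <-> ancestors_above T h y.
Proof.
case/aug_adj_cases => [[i [j [hs hxy]]]|[_ ta]] hx hy; last first.
  exact: ancestors_above_tree_adj.
have [hij _] := hs; have [d ed] := le_int_add_nat (ltW hij).
have hi : h < clab T i by case: hxy => [[ex _]|[_ ey]]; rewrite /clab -?ex -?ey.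
have hj : h < clab T j by case: hxy => [[_ ey]|[ex _]]; rewrite /clab -?ex -?ey.
have /ancestors_above_corners : forall e : nat, (e <= d)%N -> h < clab T (i + e%:Z).
  move=> e; rewrite leq_eqVlt => /orP [/eqP ->|he]; first by rewrite -ed.
  by have := succ_clab_ge HT hs (k := i + e%:Z) ltac:(lia) ltac:(lia); lia.
by rewrite -ed; case: hxy => [[-> ->]|[-> ->]] eqv; last symmetry.
Qed.

Hypothesis Hinf : forall m : int, exists k : nat, lab T (leftseq T k) <= m.

(* A tree edge is an arc of [Q] when its labels differ, and otherwise the
   diagonal added in the face of that tree edge. *)
Lemma parent_aug_adj v : VT T v -> v <> root_v -> aug_adj T Q (parent v) v.
Proof.
move=> hv vr; have [[i [hi1 hi2]] [j [hj1 hj2]]] := cv_tree_edge hv vr.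
have := lab_parent_step HT v.
have [down|ndown] := eqVneq (lab T v) (lab T (parent v) - 1).
  move=> _; left; exists i, (i + 1); split; last by left.
  by apply: is_succ_next; rewrite /clab hi1 hi2.
have [up|nup] := eqVneq (lab T v) (lab T (parent v) + 1).
  move=> _; left; exists j, (j + 1); split; last by right.
  by apply: is_succ_next; rewrite /clab hj1 hj2 up; lia.
move=> hstep; have flat : lab T v = lab T (parent v) by lia.
have [si hsi] := succ_exists HT Hinf i; have [sj hsj] := succ_exists HT Hinf j.
have [_ [lsi _]] := hsi; have [_ [lsj _]] := hsj; rewrite /clab hi1 hj1 in lsi lsj.
right; exists (parent v), (cv T si), v, (cv T sj), (lab T (parent v) - 1); split.
  exists i, j; rewrite hi1 hi2 hj1 hj2; do !split => //.
  by left; do !split => //; [exists si | exists sj].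
by right; rewrite lsi lsj flat; do !split => //; [lia | lia | left].
Qed.

Variable r : nat.
Hypothesis r_gt0 : (0 < r)%N.

Lemma Fr_ancestors_above v : Fr T Q r v -> ancestors_above T (- (r%:Z)) v.
Proof.
have root_above : ancestors_above T (- (r%:Z)) root_v.
  by apply: ancestors_above_root => //; lia.
rewrite /Fr => hF; move: hF root_above; elim=> [//|x y z [_ hx] xy /conn_head [_ hy] IH] hxa.
by apply: IH; apply/(aug_adj_ancestors_above xy hx hy).
Qed.

Lemma ancestors_above_Fr v : VT T v -> ancestors_above T (- (r%:Z)) v -> Fr T Q r v.
Proof.
have [N hN] : exists N, (depth v < N)%N by exists (depth v).+1.
elim: N v hN => [//|N IH] v hN hv /[dup] /ancestors_aboveE [hl hpa] hva.
have [ev|/eqP vr] := eqVneq v root_v; first by rewrite ev in hv hl *; exact: conn_refl.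
apply: conn_rstep (parent_aug_adj hv vr) (conj hv hl).
apply: IH hpa; [have := depth_parent_lt hv vr; lia | exact: VT_parent].
Qed.

Lemma Fr_iff v : VT T v -> Fr T Q r v <-> ancestors_above T (- (r%:Z)) v.
Proof. by move=> hv; split; [exact: Fr_ancestors_above | exact: ancestors_above_Fr]. Qed.

Lemma dFr_lab v : dFr T Q r v ->
  lab T v = - (r%:Z) /\ ancestors_above T (- (r%:Z)) (parent v).
Proof.
move=> [hv [hle [w [/Fr_ancestors_above hw hvw]]]].
have lw : - (r%:Z) < lab T w by case/ancestors_aboveE: hw.
case/aug_adj_cases: hvw => [[i [j [hs hvw]]]|[hl _]]; last lia.
have [hij [hj _]] := hs; rewrite /clab in hj.
case: hvw => [[ev ew]|[ev ew]]; rewrite -ev -ew in hj; first lia.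
have lv : lab T v = - (r%:Z) by lia.
split=> //; have [[|d] ed] := le_int_add_nat (ltW hij); first lia.
have /ancestors_above_corners : forall e : nat, (e <= d)%N -> - (r%:Z) < clab T (i + e%:Z).
  move=> e he; have := succ_clab_ge HT hs (k := i + e%:Z) ltac:(lia) ltac:(lia).
  by rewrite -[clab T i]/(lab T (cv T i)) -ew; lia.
rewrite -ew => /iffLR /(_ hw) hprev.
have := cv_adj T (i + d%:Z); rewrite (_ : i + d%:Z + 1 = j); last lia.
(* [c_{j-1}] is tree-adjacent to [v = c_j] and, unlike [v], has all its
   ancestors above [-r]; so it is the parent of [v]. *)
rewrite -ev => -[<- //|hc].
by move: hprev; rewrite ancestors_aboveE -hc => -[_ /ancestors_aboveE]; lia.
Qed.

Lemma lab_dFr v : VT T v -> lab T v = - (r%:Z) ->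
  ancestors_above T (- (r%:Z)) (parent v) -> dFr T Q r v.
Proof.
move=> hv lv hpa; have vr : v <> root_v by move=> ev; rewrite ev lab_root // in lv; lia.
have lp : - (r%:Z) < lab T (parent v) by case/ancestors_aboveE: hpa.
do 2!split => //; first by rewrite lv.
exists (parent v); split; first exact: ancestors_above_Fr (VT_parent hv vr) hpa.
have [[i [hi1 hi2]] _] := cv_tree_edge hv vr.
left; exists i, (i + 1); split; last by right.
by apply: is_succ_next; rewrite /clab hi1 hi2; have := lab_parent_step HT v; lia.
Qed.

End Levels.

Theorem proposition5 (T : itree) (eta : bool)
  (HT : in_support_mu T)
  (Hinf : forall m : int, exists k : nat, lab T (leftseq T k) <= m)
  (r : nat) (hr : (0 < r)%N) (v : vertex) (hv : mV (Phi T eta) v) :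
  (Fr T (Phi T eta) r v <->
     (forall v', on_geod v' v -> lab T v' > - (r%:Z)))
  /\
  (dFr T (Phi T eta) r v <->
     (lab T v = - (r%:Z) /\
      forall v', on_geod v' v -> v' <> v -> lab T v' > - (r%:Z))).
Proof.
have nonroot : lab T v = - (r%:Z) -> v <> root_v.
  by move=> lv ev; rewrite ev lab_root // in lv; lia.
split; first exact: Fr_iff.
split=> [/(dFr_lab HT hr) [lv hpa] | [lv hstrict]].
  by split=> //; apply/(strict_ancestorsE _ hv (nonroot lv)).
by apply: lab_dFr => //; apply/(strict_ancestorsE _ hv (nonroot lv)).
Qed.
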